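(* Let $p,q$ be squarefree positive integers such that $K=\mathbb{Q}(\sqrt p,\sqrt q)$ has degree $4$ over $\mathbb{Q}$, and let $r=\frac{pq}{\gcd(p,q)^2}$. Assume that $\alpha$ is a totally positive element of $\mathcal{O}_K$ satisfying $N(\alpha)<2\min(\sqrt p,\sqrt q,\sqrt r)$, where $N$ is the norm from $K$ to $\mathbb{Q}$, and such that $n\nmid\alpha$ in $\mathcal{O}_K$ for every integer $n>1$. Then $\alpha$ is indecomposable.
   Context: An element of $K$ is totally positive if all its images under the real embeddings of $K$ are positive. A totally positive $\alpha\in\mathcal{O}_K$ is (additively) indecomposable if it cannot be written as $\alpha=\beta+\gamma$ with $\beta,\gamma$ totally positive elements of $\mathcal{O}_K$. *)

From HB Require Import structures.
From mathcomp Require Import all_boot all_order all_algebra all_field.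
Set Implicit Arguments. Unset Strict Implicit. Unset Printing Implicit Defensive.
Import Order.TTheory GRing.Theory Num.Theory.
Local Open Scope ring_scope.

Definition squarefree (n : nat) : Prop := forall d : nat, (d * d %| n)%N -> d = 1%N.

Definition rr (p q : nat) : nat := (p * q %/ (gcdn p q) ^ 2)%N.

Definition sq (n : nat) : algC := sqrtC (n%:R).

(* K = Q(sqrt p, sqrt q) is spanned over Q by 1, sqrt p, sqrt q, sqrt r;
   it has degree 4 iff these four numbers are Q-linearly independent. *)
Definition biquad_deg4 (p q : nat) : Prop :=
  forall a b c d : rat,
    ratr a + ratr b * sq p + ratr c * sq q + ratr d * sq (rr p q) = 0 ->
    [/\ a = 0, b = 0, c = 0 & d = 0].

(* An element of K, given by its rational coordinates (a,b,c,d) w.r.t.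
   the basis 1, sqrt p, sqrt q, sqrt r. *)
Definition Kelt := (rat * rat * rat * rat)%type.

(* The four (real) embeddings of K: sqrt p |-> (-1)^s sqrt p,
   sqrt q |-> (-1)^t sqrt q, hence sqrt r |-> (-1)^(s+t) sqrt r.
   emb p q false false is the identity (the element itself in algC). *)
Definition emb (p q : nat) (s t : bool) (x : Kelt) : algC :=
  ratr x.1.1.1 + (-1) ^+ s * ratr x.1.1.2 * sq p
  + (-1) ^+ t * ratr x.1.2 * sq q + (-1) ^+ (s (+) t) * ratr x.2 * sq (rr p q).

Definition Kval (p q : nat) (x : Kelt) : algC := emb p q false false x.

Definition inOK (p q : nat) (x : Kelt) : Prop := Kval p q x \in Aint.

Definition totpos (p q : nat) (x : Kelt) : Prop :=
  forall s t : bool, 0 < emb p q s t x.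

Definition normK (p q : nat) (x : Kelt) : algC :=
  emb p q false false x * emb p q false true x *
  emb p q true false x * emb p q true true x.

Definition indecomposable (p q : nat) (x : Kelt) : Prop :=
  inOK p q x /\ totpos p q x /\
  ~ (exists y z : Kelt, [/\ inOK p q y, inOK p q z, totpos p q y, totpos p q z
        & Kval p q x = Kval p q y + Kval p q z]).

(* Suppose alpha = y + z with y, z totally positive integers of K.  Fix a quadratic
   subfield F = Q(sqrt n), n in {p, q, r}, let tau generate Gal(K/F) and let sigma
   be an automorphism of K that is nontrivial on F.  The relative norms
   B = y tau(y), G = z tau(z) and the relative trace D = y tau(z) + z tau(y) are
   totally positive integers of F with alpha tau(alpha) = B + G + D, hence
   N(alpha) = (B + G + D) sigma(B + G + D).  For U, V among B, G, D the difference
   U sigma(V) - sigma(U) V is an integer of F of the form v sqrt n, so if it is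
   nonzero its square is at least n (n is squarefree) and U sigma(V) + sigma(U) V
   exceeds sqrt n.  If B sigma(G) <> sigma(B) G, one of the two other differences
   is nonzero as well and N(alpha) > 2 sqrt n.  So the hypothesis on N(alpha)
   makes N_{K/F}(z / y) fixed by sigma for all three subfields F, which forces all
   conjugates of z / y to be equal: z = l y with l a positive rational, and
   alpha = (1 + l) y is divisible by the numerator of 1 + l. *)

From HB Require Import structures.
From mathcomp Require Import all_boot all_order all_algebra all_field.
From mathcomp Require Import ring zify.
Import Order.TTheory GRing.Theory Num.Theory.
Local Open Scope ring_scope.

Lemma sq_gt0 (n : nat) : (0 < n)%N -> 0 < sq n.
Proof. by move=> n_gt0; rewrite sqrtC_gt0 ltr0n. Qed.

Lemma sqr_sq (n : nat) : sq n ^+ 2 = n%:R.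
Proof. exact: sqrtCK. Qed.

Lemma squarefree_sqr_mul_int (n : nat) (v : rat) :
  squarefree n -> v ^+ 2 * n%:R \is a Num.int -> v \is a Num.int.
Proof.
move=> sqf_n /intrP[z zE]; set m := numq v; set k := denq v.
have k_gt0 : 0 < k := denq_gt0 v.
have k2_dvd : (k ^+ 2 %| m ^+ 2 * n%:Z)%Z.
  apply/dvdzP; exists z; apply: (@intr_inj rat).
  rewrite !intrM -zE -[v]divq_num_den -/m -/k; field.
  by rewrite intr_eq0 gt_eqF.
have coprime_km : coprimez (k ^+ 2) (m ^+ 2).
  by rewrite coprimezXl // coprimez_sym coprimezXl // coprimezE coprime_num_den.
rewrite Gauss_dvdzr // in k2_dvd.
have /sqf_n absk1 : (`|k| * `|k| %| n)%N by rewrite -abszM -expr2.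
by rewrite Qint_def -/k -[k]gtz0_abs // absk1.
Qed.

Lemma squarefree_sqr_ge (n : nat) (v : rat) (w : algC) :
  squarefree n -> w \in Aint -> w = ratr v * sq n -> w != 0 -> n%:R <= w ^+ 2.
Proof.
move=> sqf_n w_int wE w_neq0.
have v_neq0 : ratr v != 0 :> algC by apply: contraNneq w_neq0 => v0; rewrite wE v0 mul0r.
have w2E : w ^+ 2 = ratr (v ^+ 2 * n%:R) :> algC.
  by rewrite wE exprMn sqr_sq rmorphM rmorphXn rmorph_nat.
have w2_int : w ^+ 2 \in Num.int.
  by apply: Cint_rat_Aint; [rewrite w2E; exact: Crat_rat | exact: rpredX].
have v_int : v \is a Num.int.
  by apply: squarefree_sqr_mul_int sqf_n _; move: w2_int; rewrite w2E Cint_rat.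
by rewrite wE exprMn sqr_sq ler_peMl ?ler0n // sqr_intr_ge1 // Cint_rat.
Qed.

Lemma sqrtC_lt_add {C : numClosedFieldType} {x y d : C} :
  0 < x -> 0 < y -> 0 <= d -> d <= (x - y) ^+ 2 -> sqrtC d < x + y.
Proof.
move=> x_gt0 y_gt0 d_ge0 d_le.
have xy_ge0 : 0 <= x + y by rewrite ltW ?addr_gt0.
rewrite -(sqrCK xy_ge0) ltr_sqrtC ?nnegrE ?exprn_ge0 //.
apply: le_lt_trans d_le _.
by rewrite -subr_gt0 (_ : _ - _ = 4%:R * x * y); [rewrite !mulr_gt0 ?ltr0n | ring].
Qed.

Lemma cross_eq_of_lt {C : numClosedFieldType} {b b' c c' e e' d : C} :
  0 < b -> 0 < b' -> 0 < c -> 0 < c' -> 0 < e -> 0 < e' -> 0 <= d ->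
  (b * c' != b' * c -> d <= (b * c' - b' * c) ^+ 2) ->
  (b * e' != b' * e -> d <= (b * e' - b' * e) ^+ 2) ->
  (c * e' != c' * e -> d <= (c * e' - c' * e) ^+ 2) ->
  (b + c + e) * (b' + c' + e') < 2 * sqrtC d -> b * c' = b' * c.
Proof.
move=> b_gt0 b'_gt0 c_gt0 c'_gt0 e_gt0 e'_gt0 d_ge0 d_le_bc d_le_be d_le_ce lt2.
apply/eqP; apply: contraTT lt2 => bc_neq.
have lt_bc := sqrtC_lt_add (mulr_gt0 b_gt0 c'_gt0) (mulr_gt0 b'_gt0 c_gt0) d_ge0
  (d_le_bc bc_neq).
have prodE : (b + c + e) * (b' + c' + e') = (b * c' + b' * c)
    + ((b * e' + b' * e) + (c * e' + c' * e)) + (b * b' + c * c' + e * e') by ring.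
suff : 2 * sqrtC d < (b * c' + b' * c) + ((b * e' + b' * e) + (c * e' + c' * e)).
  move=> /lt_le_trans lt2'; rewrite lt_gtF // prodE lt2' // lerDl ltW //.
  by rewrite !addr_gt0 ?mulr_gt0.
rewrite mulr_natl mulr2n ltrD //.
(* (b c' - b' c) e e' = (b e') (c' e) - (b' e) (c e'), so the other two cross
   differences cannot both vanish. *)
have [be_eq | be_neq] := eqVneq (b * e') (b' * e).
  have ce_neq : c * e' != c' * e.
    apply: contra_neq bc_neq => ce_eq.
    apply: (mulIf (mulf_neq0 (lt0r_neq0 e_gt0) (lt0r_neq0 e'_gt0))).
    by transitivity (b * e' * (c' * e)); [ring | rewrite be_eq -ce_eq; ring].
  have := sqrtC_lt_add (mulr_gt0 c_gt0 e'_gt0) (mulr_gt0 c'_gt0 e_gt0) d_ge0 (d_le_ce ce_neq).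
  by move=> /lt_le_trans-> //; rewrite lerDr ltW // addr_gt0 ?mulr_gt0.
have := sqrtC_lt_add (mulr_gt0 b_gt0 e'_gt0) (mulr_gt0 b'_gt0 e_gt0) d_ge0 (d_le_be be_neq).
by move=> /lt_le_trans-> //; rewrite lerDl ltW // addr_gt0 ?mulr_gt0.
Qed.

Lemma klein_ratio_const {F : numFieldType} (r : bool -> bool -> F) :
  (forall s t, 0 < r s t) ->
  r false false * r false true = r true false * r true true ->
  r false false * r true false = r false true * r true true ->
  r false false * r true true = r true false * r false true ->
  forall s t, r s t = r false false.
Proof.
move=> r_gt0 Ep Eq Er.
have r_neq0 s t : r s t != 0 by rewrite lt0r_neq0.
have sqr_inj s t s' t' : r s t ^+ 2 = r s' t' ^+ 2 -> r s t = r s' t'.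
  by move/eqP; rewrite eqrXn2 ?ltW // => /eqP.
have E11 : r true true = r false false.
  apply: sqr_inj; apply: (mulIf (mulf_neq0 (r_neq0 false true) (r_neq0 true false))).
  by transitivity (r false true * r true true * (r true false * r true true));
    [| rewrite -Ep -Eq]; ring.
have E01 : r false true = r true false.
  by apply: (mulfI (r_neq0 false false)); rewrite Ep E11 mulrC.
have E10 : r true false = r false false.
  by apply: sqr_inj; rewrite expr2 -{2}E01 -Er E11 expr2.
by case=> [] []; rewrite ?E01 ?E10 ?E11.
Qed.

Lemma Aint_div_numer {x y : algC} {l : rat} :
  0 < l -> x \in Aint -> y \in Aint -> x = (1 + ratr l) * y ->
  exists2 n : nat, (1 < n)%N & x / n%:R \in Aint.
Proof.
move=> l_gt0 x_int y_int xE; set m := numq l; set k := denq l.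
have m_gt0 : 0 < m by rewrite numq_gt0.
have k_gt0 : 0 < k := denq_gt0 l.
have lE : ratr l = m%:~R / k%:~R :> algC.
  by rewrite -[l]divq_num_den fmorph_div /= !ratr_int.
have coprime_mk_k : gcdz (m + k) k = 1.
  by rewrite gcdzC addrC gcdzDl gcdzC /gcdz (eqP (coprime_num_den l)).
have [u [v uvE]] := Bezoutz (m + k) k; rewrite coprime_mk_k in uvE.
exists (absz (m + k)); first by lia.
have -> : ((absz (m + k))%:R : algC) = (m + k)%:~R by rewrite natr_absz gtr0_norm ?addr_gt0.
have uvE' : u%:~R * (m + k)%:~R + v%:~R * k%:~R = 1 :> algC.
  by rewrite -!intrM -intrD uvE.
have -> : x / (m + k)%:~R = u%:~R * x + v%:~R * y.
  rewrite -[LHS]mul1r -{1}uvE' xE lE; field.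
  by rewrite -intrD !intr_eq0 !lt0r_neq0 ?addr_gt0.
by rewrite rpredD // rpredM // Aint_int.
Qed.

Definition kadd (x y : Kelt) : Kelt :=
  (x.1.1.1 + y.1.1.1, x.1.1.2 + y.1.1.2, x.1.2 + y.1.2, x.2 + y.2).

Definition kconst (c : rat) : Kelt := (c, 0, 0, 0).

Definition kconj (a b : bool) (x : Kelt) : Kelt :=
  (x.1.1.1, (-1) ^+ a * x.1.1.2, (-1) ^+ b * x.1.2, (-1) ^+ (a (+) b) * x.2).

Lemma emb_kadd p q s t x y :
  emb p q s t (kadd x y) = emb p q s t x + emb p q s t y.
Proof. by rewrite /emb /= !rmorphD; ring. Qed.

Lemma emb_kconst p q s t c : emb p q s t (kconst c) = ratr c.
Proof. by rewrite /emb /= rmorph0; ring. Qed.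

Lemma emb_kconj p q s t a b x :
  emb p q s t (kconj a b x) = emb p q (s (+) a) (t (+) b) x.
Proof.
rewrite /emb /= !rmorphM !rmorph_sign.
by case: s t a b => [] [] [] []; rewrite /= ?expr0 ?expr1; ring.
Qed.

Lemma emb_trace p q x :
  emb p q false false x + emb p q false true x + emb p q true false x
    + emb p q true true x = 4%:R * ratr x.1.1.1.
Proof. by rewrite /emb /=; ring. Qed.

Section Biquadratic.

Variables p q : nat.
Hypotheses (p_gt0 : (0 < p)%N) (q_gt0 : (0 < q)%N).

Let g := gcdn p q.

Lemma gcd_gt0 : (0 < g)%N.
Proof. by rewrite gcdn_gt0 p_gt0. Qed.

Lemma rr_divn : rr p q = (p %/ g * (q %/ g))%N.
Proof.
rewrite /rr -/g.
have -> : (p * q = p %/ g * (q %/ g) * g ^ 2)%N.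
  by rewrite -mulnn mulnACA !divnK ?dvdn_gcdl ?dvdn_gcdr.
by rewrite mulnK // expn_gt0 gcd_gt0.
Qed.

Lemma coprime_divn_gcd : coprime (p %/ g) (q %/ g).
Proof.
rewrite /coprime -(eqn_pmul2r gcd_gt0) mul1n muln_gcdl.
by rewrite !divnK ?dvdn_gcdl ?dvdn_gcdr.
Qed.

Lemma divn_gcd_gt0 : (0 < p %/ g)%N /\ (0 < q %/ g)%N.
Proof.
split; rewrite divn_gt0 ?gcd_gt0 //; apply: dvdn_leq => //.
  exact: dvdn_gcdl.
exact: dvdn_gcdr.
Qed.

Lemma rr_gt0 : (0 < rr p q)%N.
Proof. by rewrite rr_divn muln_gt0; case: divn_gcd_gt0 => -> ->. Qed.

Lemma natr_rr : (rr p q)%:R = p%:R * q%:R / g%:R ^+ 2 :> algC.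
Proof. by rewrite natf_div -?natrM -?natrX // dvdn_mul ?dvdn_gcdl ?dvdn_gcdr. Qed.

Lemma sq_rr : g%:R * sq (rr p q) = sq p * sq q.
Proof.
have g_gt0 : (0 : algC) < g%:R by rewrite ltr0n gcd_gt0.
apply/eqP; rewrite -(eqrXn2 (n := 2)) ?mulr_ge0 ?ltW ?sq_gt0 ?rr_gt0 //.
by rewrite !exprMn !sqr_sq natr_rr mulrC divfK // expf_neq0 // gt_eqF.
Qed.

(* Uses sqrt p sqrt q = g sqrt r, sqrt p sqrt r = (p/g) sqrt q and
   sqrt q sqrt r = (q/g) sqrt p. *)
Definition kmul (x y : Kelt) : Kelt :=
  (x.1.1.1 * y.1.1.1 + x.1.1.2 * y.1.1.2 * p%:R + x.1.2 * y.1.2 * q%:R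
     + x.2 * y.2 * (rr p q)%:R,
   x.1.1.1 * y.1.1.2 + x.1.1.2 * y.1.1.1 + (x.1.2 * y.2 + x.2 * y.1.2) * (q %/ g)%:R,
   x.1.1.1 * y.1.2 + x.1.2 * y.1.1.1 + (x.1.1.2 * y.2 + x.2 * y.1.1.2) * (p %/ g)%:R,
   x.1.1.1 * y.2 + x.2 * y.1.1.1 + (x.1.1.2 * y.1.2 + x.1.2 * y.1.1.2) * g%:R).

Lemma emb_kmul s t x y :
  emb p q s t (kmul x y) = emb p q s t x * emb p q s t y.
Proof.
have g_neq0 : g%:R != 0 :> algC by rewrite pnatr_eq0 -lt0n gcd_gt0.
have sq_rrE : sq (rr p q) = sq p * sq q / g%:R by rewrite -sq_rr mulrC mulKf.
rewrite /emb /kmul /= !(rmorphD, rmorphM, rmorph_nat) /= natr_rr sq_rrE.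
rewrite !natf_div ?dvdn_gcdl ?dvdn_gcdr // -(sqr_sq p) -(sqr_sq q).
by case: s t => [] []; rewrite /= ?expr0 ?expr1; field.
Qed.

Lemma emb_kmul_kconst s t c x :
  emb p q s t (kmul (kconst c) x) = ratr c * emb p q s t x.
Proof. by rewrite emb_kmul emb_kconst. Qed.

Hypothesis deg4 : biquad_deg4 p q.

Lemma Kval_inj : injective (Kval p q).
Proof.
move=> x y Exy.
have [] := deg4 (x.1.1.1 - y.1.1.1) (x.1.1.2 - y.1.1.2) (x.1.2 - y.1.2) (x.2 - y.2).
  transitivity (Kval p q x - Kval p q y); last by rewrite Exy subrr.
  by rewrite /Kval /emb /= !rmorphB /=; ring.
move: x y {Exy} => [[[? ?] ?] ?] [[[? ?] ?] ?] /=.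
by move=> /subr0_eq-> /subr0_eq-> /subr0_eq-> /subr0_eq->.
Qed.

Lemma emb_horner (P : {poly rat}) x :
  exists z, forall s t, emb p q s t z = (map_poly ratr P).[emb p q s t x].
Proof.
elim/poly_ind: P => [|P c [z Ez]].
  by exists (kconst 0) => s t; rewrite emb_kconst rmorph0 map_poly0 horner0.
exists (kadd (kmul z x) (kconst c)) => s t.
by rewrite emb_kadd emb_kmul emb_kconst Ez rmorphD rmorphM /= map_polyX map_polyC hornerMXaddC.
Qed.

(* Every conjugate of [Kval x] is a root of its minimal polynomial, which has
   rational coefficients. *)
Lemma emb_Aint x s t : inOK p q x -> emb p q s t x \in Aint.
Proof.
move=> x_int; have [P [minE _] _] := minCpolyP (Kval p q x).
have [z Ez] := emb_horner P x.
have z0 : z = kconst 0.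
  by apply: Kval_inj; rewrite /Kval Ez -minE emb_kconst rmorph0; exact/eqP/root_minCpoly.
apply: (root_monic_Aint (p := minCpoly (Kval p q x))) x_int; last exact: minCpoly_monic.
by rewrite /root minE -Ez z0 emb_kconst rmorph0.
Qed.

Lemma inOK_kadd x y : inOK p q x -> inOK p q y -> inOK p q (kadd x y).
Proof. by move=> x_int y_int; rewrite /inOK /Kval emb_kadd rpredD. Qed.

Lemma inOK_kmul x y : inOK p q x -> inOK p q y -> inOK p q (kmul x y).
Proof. by move=> x_int y_int; rewrite /inOK /Kval emb_kmul rpredM. Qed.

Lemma inOK_kconj a b x : inOK p q x -> inOK p q (kconj a b x).
Proof. by move=> x_int; rewrite /inOK /Kval emb_kconj emb_Aint. Qed.

Definition relnorm (a b : bool) (x : Kelt) : Kelt := kmul x (kconj a b x).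

Definition reltrace (a b : bool) (x : Kelt) : Kelt := kadd x (kconj a b x).

Lemma emb_relnorm a b s t x :
  emb p q s t (relnorm a b x) = emb p q s t x * emb p q (s (+) a) (t (+) b) x.
Proof. by rewrite emb_kmul emb_kconj. Qed.

Lemma emb_reltrace a b s t x :
  emb p q s t (reltrace a b x) = emb p q s t x + emb p q (s (+) a) (t (+) b) x.
Proof. by rewrite emb_kadd emb_kconj. Qed.

Definition fixed_by (a b : bool) (x : Kelt) : Prop :=
  forall s t, emb p q (s (+) a) (t (+) b) x = emb p q s t x.

Lemma fixed_by_relnorm a b x : fixed_by a b (relnorm a b x).
Proof. by move=> s t; rewrite !emb_relnorm !addbK mulrC. Qed.

Lemma fixed_by_reltrace a b x : fixed_by a b (reltrace a b x).
Proof. by move=> s t; rewrite !emb_reltrace !addbK addrC. Qed.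

Lemma fixed_by_kmul_kconj s t {a b : bool} {u v : Kelt} :
  fixed_by a b u -> fixed_by a b v -> fixed_by a b (kmul u (kconj s t v)).
Proof.
move=> u_fixed v_fixed s' t'.
by rewrite !emb_kmul !emb_kconj u_fixed (addbAC s') (addbAC t') v_fixed.
Qed.

(* [Q(sqrt (fixrad a b))] is the quadratic subfield fixed by [kconj a b]. *)
Definition fixrad (a b : bool) : nat := if a then (if b then rr p q else q) else p.

Lemma emb_sub_fixed {a b s t : bool} {x : Kelt} :
  (a, b) != (false, false) -> (s, t) != (false, false) -> (s, t) != (a, b) ->
  fixed_by a b x ->
  exists v : rat, emb p q false false x - emb p q s t x = ratr v * sq (fixrad a b).
Proof.
move=> tau_neq0 sigma_neq0 sigma_neq_tau x_fixed.
exists (2 * if a then (if b then x.2 else x.1.2) else x.1.1.2).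
(* Averaging over [tau] kills the coordinates outside [Q(sqrt (fixrad a b))]. *)
have -> : emb p q false false x - emb p q s t x = (emb p q false false x + emb p q a b x
    - (emb p q s t x + emb p q (s (+) a) (t (+) b) x)) / 2.
  by rewrite (x_fixed false false) x_fixed; field.
case: a b s t {x_fixed} tau_neq0 sigma_neq0 sigma_neq_tau => [] [] [] [] //= _ _ _.
all: by rewrite /emb /fixrad /= !(rmorphM, rmorph_nat) /=; field.
Qed.

Hypotheses (p_sqf : squarefree p) (q_sqf : squarefree q).

Lemma squarefree_rr : squarefree (rr p q).
Proof.
move=> d; rewrite rr_divn => dd_dvd.
have [p1_gt0 q1_gt0] := divn_gcd_gt0.
have [d_le1 | d_gt1] := leqP d 1.
  by case: d d_le1 dd_dvd => [|[]] // _; rewrite mul0n dvd0n muln_eq0 !eqn0Ngt p1_gt0 q1_gt0.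
have l_prime := pdiv_prime d_gt1; set l := pdiv d in l_prime.
have l_gt1 := prime_gt1 l_prime.
have ll_dvd : (l * l %| p %/ g * (q %/ g))%N.
  by apply: dvdn_trans dd_dvd; rewrite dvdn_mul ?pdiv_dvd.
have /orP[l_dvd_p1 | l_dvd_q1] : (l %| p %/ g)%N || (l %| q %/ g)%N.
  by rewrite -Euclid_dvdM // (dvdn_trans (dvdn_mulr l (dvdnn l))).
- have cop : coprime (l * l) (q %/ g).
    by rewrite coprimeMl andbb (coprime_dvdl l_dvd_p1 coprime_divn_gcd).
  rewrite Gauss_dvdl // in ll_dvd.
  have /p_sqf l1 := dvdn_trans ll_dvd (dvdn_div (dvdn_gcdl p q)).
  by rewrite l1 in l_gt1.
- have cop : coprime (l * l) (p %/ g).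
    by rewrite coprimeMl andbb (coprime_dvdl l_dvd_q1) // coprime_sym coprime_divn_gcd.
  rewrite Gauss_dvdr // in ll_dvd.
  have /q_sqf l1 := dvdn_trans ll_dvd (dvdn_div (dvdn_gcdr p q)).
  by rewrite l1 in l_gt1.
Qed.

Lemma squarefree_fixrad a b : squarefree (fixrad a b).
Proof. by case: a b => [] []; [exact: squarefree_rr | exact: q_sqf | exact: p_sqf ..]. Qed.

(* The cross difference is [z - sigma z] for [z = u * sigma v], fixed by [tau]. *)
Lemma cross_sqr_ge {a b s t : bool} {u v : Kelt} :
  (a, b) != (false, false) -> (s, t) != (false, false) -> (s, t) != (a, b) ->
  inOK p q u -> inOK p q v -> fixed_by a b u -> fixed_by a b v ->
  emb p q false false u * emb p q s t v != emb p q s t u * emb p q false false v ->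
  (fixrad a b)%:R <=
    (emb p q false false u * emb p q s t v - emb p q s t u * emb p q false false v) ^+ 2.
Proof.
move=> tau_neq0 sigma_neq0 sigma_neq_tau u_int v_int u_fixed v_fixed.
set z := kmul u (kconj s t v).
have -> : emb p q false false u * emb p q s t v = emb p q false false z.
  by rewrite emb_kmul emb_kconj.
have -> : emb p q s t u * emb p q false false v = emb p q s t z.
  by rewrite emb_kmul emb_kconj !addbb.
rewrite -subr_eq0 => z_neq.
have [w wE] := emb_sub_fixed tau_neq0 sigma_neq0 sigma_neq_tau
  (fixed_by_kmul_kconj s t u_fixed v_fixed).
apply: squarefree_sqr_ge wE z_neq; first exact: squarefree_fixrad.
by apply: rpredB; apply: emb_Aint; apply: inOK_kmul => //; exact: inOK_kconj.
Qed.

Lemma normK_pairs (x : Kelt) {a b s t : bool} :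
  (a, b) != (false, false) -> (s, t) != (false, false) -> (s, t) != (a, b) ->
  normK p q x = emb p q false false x * emb p q a b x
                * (emb p q s t x * emb p q (s (+) a) (t (+) b) x).
Proof. by case: a b s t => [] [] [] [] //= _ _ _; rewrite /normK; ring. Qed.

Lemma relnorm_ratio_fixed {a b s t : bool} {x y z : Kelt} :
  (a, b) != (false, false) -> (s, t) != (false, false) -> (s, t) != (a, b) ->
  inOK p q y -> inOK p q z -> totpos p q y -> totpos p q z ->
  Kval p q x = Kval p q y + Kval p q z -> normK p q x < 2 * sq (fixrad a b) ->
  emb p q false false z / emb p q false false y * (emb p q a b z / emb p q a b y) =
  emb p q s t z / emb p q s t y
    * (emb p q (s (+) a) (t (+) b) z / emb p q (s (+) a) (t (+) b) y).
Proof.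
move=> tau_neq0 sigma_neq0 sigma_neq_tau y_int z_int y_pos z_pos sumE normN.
have xE : x = kadd y z by apply: Kval_inj; rewrite /Kval emb_kadd.
set B := relnorm a b y; set G := relnorm a b z.
set D := reltrace a b (kmul y (kconj a b z)).
have sum_pairE s' t' : (emb p q s' t' y + emb p q s' t' z)
    * (emb p q (s' (+) a) (t' (+) b) y + emb p q (s' (+) a) (t' (+) b) z)
    = emb p q s' t' B + emb p q s' t' G + emb p q s' t' D.
  by rewrite !emb_relnorm emb_reltrace !emb_kmul !emb_kconj !addbK; ring.
rewrite xE (normK_pairs _ tau_neq0 sigma_neq0 sigma_neq_tau) !emb_kadd in normN.
rewrite (sum_pairE false false) sum_pairE in normN.
have B_int : inOK p q B by apply: inOK_kmul => //; exact: inOK_kconj.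
have G_int : inOK p q G by apply: inOK_kmul => //; exact: inOK_kconj.
have D_int : inOK p q D.
  have w_int : inOK p q (kmul y (kconj a b z)) by apply: inOK_kmul => //; exact: inOK_kconj.
  by apply: inOK_kadd => //; exact: inOK_kconj.
have B_fixed : fixed_by a b B := fixed_by_relnorm a b y.
have G_fixed : fixed_by a b G := fixed_by_relnorm a b z.
have D_fixed : fixed_by a b D := fixed_by_reltrace a b _.
have cross_gap u v := @cross_sqr_ge a b s t u v tau_neq0 sigma_neq0 sigma_neq_tau.
have B_gt0 s' t' : 0 < emb p q s' t' B by rewrite emb_relnorm mulr_gt0.
have G_gt0 s' t' : 0 < emb p q s' t' G by rewrite emb_relnorm mulr_gt0.
have D_gt0 s' t' : 0 < emb p q s' t' D.
  by rewrite emb_reltrace !emb_kmul !emb_kconj addr_gt0 ?mulr_gt0.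
have := cross_eq_of_lt (B_gt0 _ _) (B_gt0 s t) (G_gt0 _ _) (G_gt0 s t) (D_gt0 _ _) (D_gt0 s t)
  (ler0n _ (fixrad a b)) (cross_gap _ _ B_int G_int B_fixed G_fixed)
  (cross_gap _ _ B_int D_int B_fixed D_fixed) (cross_gap _ _ G_int D_int G_fixed D_fixed)
  normN.
rewrite !emb_relnorm /= => cross.
rewrite !mulf_div; apply/eqP; rewrite eqr_div ?mulf_neq0 ?lt0r_neq0 //; apply/eqP.
by rewrite [LHS]mulrC -cross mulrC.
Qed.

Lemma totpos_ratio_rat {y z : Kelt} {r : algC} :
  totpos p q y -> totpos p q z -> (forall s t, emb p q s t z = r * emb p q s t y) ->
  exists2 l : rat, 0 < l & r = ratr l.
Proof.
move=> y_pos z_pos zE.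
have trace_gt0 x : totpos p q x -> 0 < x.1.1.1.
  move=> x_pos; rewrite -(ltr_rat algC) rmorph0 -(pmulr_rgt0 _ (ltr0n _ 4)) -(emb_trace p q).
  by do ![exact: (x_pos _ _) | apply: addr_gt0].
have y1_neq0 : ratr y.1.1.1 != 0 :> algC by rewrite fmorph_eq0 lt0r_neq0 ?trace_gt0.
exists (z.1.1.1 / y.1.1.1); first by rewrite divr_gt0 ?trace_gt0.
rewrite fmorph_div /=; apply: (mulIf y1_neq0); rewrite divfK //.
apply: (mulfI (_ : 4%:R != 0)); first by rewrite pnatr_eq0.
by rewrite mulrCA -!(emb_trace p q) !zE; ring.
Qed.

Lemma sum_totpos_proportional {x y z : Kelt} :
  inOK p q y -> inOK p q z -> totpos p q y -> totpos p q z ->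
  Kval p q x = Kval p q y + Kval p q z ->
  normK p q x < 2 * sq p -> normK p q x < 2 * sq q -> normK p q x < 2 * sq (rr p q) ->
  exists2 l : rat, 0 < l & Kval p q x = (1 + ratr l) * Kval p q y.
Proof.
move=> y_int z_int y_pos z_pos sumE lt_p lt_q lt_r.
have r_const := klein_ratio_const (fun s t => emb p q s t z / emb p q s t y)
  (fun s t => divr_gt0 (z_pos s t) (y_pos s t))
  (relnorm_ratio_fixed (a := false) (b := true) (s := true) (t := false)
     isT isT isT y_int z_int y_pos z_pos sumE lt_p)
  (relnorm_ratio_fixed (a := true) (b := false) (s := false) (t := true)
     isT isT isT y_int z_int y_pos z_pos sumE lt_q)
  (relnorm_ratio_fixed (a := true) (b := true) (s := true) (t := false)
     isT isT isT y_int z_int y_pos z_pos sumE lt_r).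
have zE s t : emb p q s t z = emb p q false false z / emb p q false false y * emb p q s t y.
  by rewrite -(r_const s t) divfK ?lt0r_neq0.
have [l l_gt0 rE] := totpos_ratio_rat y_pos z_pos zE.
by exists l; rewrite // sumE /Kval zE rE mulrDl mul1r.
Qed.

End Biquadratic.

Theorem proposition4 (p q : nat) (alpha : Kelt) :
  (0 < p)%N -> (0 < q)%N -> squarefree p -> squarefree q ->
  biquad_deg4 p q ->
  inOK p q alpha -> totpos p q alpha ->
  normK p q alpha < 2 * Num.min (sq p) (Num.min (sq q) (sq (rr p q))) ->
  (forall n : nat, (1 < n)%N ->
     ~ (exists g : Kelt, inOK p q g /\ Kval p q alpha = n%:R * Kval p q g)) ->
  indecomposable p q alpha.
Proof.
move=> p_gt0 q_gt0 p_sqf q_sqf deg4 alpha_int alpha_pos normN alpha_prim.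
split=> //; split=> //; case=> y [z [y_int z_int y_pos z_pos sumE]].
have sq_real n : sq n \is Num.real by rewrite sqrtC_real ?ler0n.
have [lt_p lt_q lt_r] : [/\ normK p q alpha < 2 * sq p, normK p q alpha < 2 * sq q
                          & normK p q alpha < 2 * sq (rr p q)].
  move: normN; rewrite -!ltr_pdivrMl ?ltr0n //.
  by rewrite !comparable_lt_min ?real_comparable ?min_real // => /and3P.
have [l l_gt0 alphaE] := sum_totpos_proportional p q p_gt0 q_gt0 deg4 p_sqf q_sqf
  y_int z_int y_pos z_pos sumE lt_p lt_q lt_r.
have [n n_gt1 alpha_div] := Aint_div_numer l_gt0 alpha_int y_int alphaE.
apply: (alpha_prim n n_gt1); exists (kmul p q (kconst n%:R^-1) alpha).
rewrite /inOK /Kval !emb_kmul_kconst // fmorphV /= ratr_nat; split; first by rewrite mulrC.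
by rewrite mulVKf // pnatr_eq0 -lt0n (ltnW n_gt1).
Qed.
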